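(* There is a class $\mathcal{C}$ of digraphs of bounded expansion such that for every constant $c$ we have $\gamma_1(G)\ge c$ for infinitely many $G\in\mathcal{C}$, and $\alpha_1(G)=2$ for all $G\in\mathcal{C}$.
   Context: Directed models and depth-$r$ minors: a digraph $H$ has a directed model in $G$ if there is a map $\delta$ assigning to each $v\in V(H)$ a subgraph $\delta(v)\subseteq G$ and to each arc $e$ of $H$ an arc $\delta(e)$ of $G$ with (1) branch sets pairwise disjoint; (2) if $e=(u,v)$ and $\delta(e)=(u',v')$ then $u'\in\delta(u)$, $v'\in\delta(v)$; (3) for each $v$, with $\mathrm{in}(\delta(v))$ (resp. $\mathrm{out}(\delta(v))$) the vertices of $\delta(v)$ on images of arcs entering (resp. leaving) $v$: every in-vertex reaches every out-vertex by a directed path in $\delta(v)$, some vertex of $\delta(v)$ reaches all out-vertices, and some vertex of $\delta(v)$ is reached from all in-vertices. $H$ is a depth-$r$ minor of $G$ if there is such a model in which all paths in branch sets have length at most $r$. $\nabla_r(G)$ is the maximum of $|E(H)|/|V(H)|$ over depth-$r$ minors $H$ of $G$; a class has bounded expansion if $\nabla_r(G)\le f(r)$ for some function $f$, all $r\ge0$, all $G$ in the class. $N_r^+(v)$ is the set of vertices $u$ such that $G$ has a directed path of length at most $r$ from $v$ to $u$ (including $v$). $\gamma_r(G)$ is the size of a smallest $X\subseteq V(G)$ with $N_r^+(X)=V(G)$. $\alpha_r(G)$ is the size of a largest set $Y\subseteq V(G)$ such that for all distinct $x,y\in Y$ there is no $u\in V(G)$ with $x,y\in N_r^+(u)$. 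*)

From HB Require Import structures.
From mathcomp Require Import all_boot all_order all_algebra.
From Stdlib Require List.
Set Implicit Arguments. Unset Strict Implicit. Unset Printing Implicit Defensive.
Import Order.TTheory GRing.Theory Num.Theory.

(* A (finite, simple, loopless) digraph on vertex set 'I_n; arcs are a finite
   set of ordered pairs, so Leibniz equality of digraphs is extensional. *)
Record digraph := Digraph {
  dn : nat;
  darcs : {set 'I_dn * 'I_dn};
  dloopless : [forall x : 'I_dn, (x, x) \notin darcs] }.

Definition arcrel (n : nat) (A : {set 'I_n * 'I_n}) : rel 'I_n :=
  fun a b => (a, b) \in A.

Definition reach (n : nat) (A : {set 'I_n * 'I_n}) (x y : 'I_n) : bool :=
  connect (arcrel A) x y.

Definition depth_minor (r : nat) (H G : digraph) : Prop :=
  exists (S : 'I_(dn H) -> {set 'I_(dn G)})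
         (A : 'I_(dn H) -> {set 'I_(dn G) * 'I_(dn G)})
         (d : 'I_(dn H) * 'I_(dn H) -> 'I_(dn G) * 'I_(dn G)),
  [/\
   (forall v a, a \in A v -> [/\ a \in darcs G, a.1 \in S v & a.2 \in S v]),
   (forall u v, u != v -> [disjoint S u & S v]),
   (forall e, e \in darcs H ->
      [/\ d e \in darcs G, (d e).1 \in S e.1 & (d e).2 \in S e.2]),
   (forall v,
      let inv := [set (d e).2 | e in [set e in darcs H | e.2 == v]] in
      let outv := [set (d e).1 | e in [set e in darcs H | e.1 == v]] in
      [/\ (forall x y, x \in inv -> y \in outv -> reach (A v) x y),
          (exists2 z, z \in S v & forall y, y \in outv -> reach (A v) z y) &
          (exists2 z, z \in S v & forall x, x \in inv -> reach (A v) x z)]) &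
   (forall v (x : 'I_(dn G)) (p : seq 'I_(dn G)),
      x \in S v -> path (arcrel (A v)) x p -> uniq (x :: p) -> size p <= r)].

(* nabla_r(G) <= f r for all G in C, unfolded: every depth-r minor H of G
   satisfies |E(H)| / |V(H)| <= f r  (i.e. |E(H)| <= f r * |V(H)|). *)
Definition bounded_expansion (C : digraph -> Prop) : Prop :=
  exists f : nat -> rat, forall (r : nat) (G H : digraph),
    C G -> depth_minor r H G ->
    ((#|darcs H|)%:R <= f r * (dn H)%:R)%R.

(* N_r^+(v): vertices u reachable from v by a directed path of length <= r *)
Definition outball (G : digraph) (r : nat) (v : 'I_(dn G)) : {set 'I_(dn G)} :=
  [set u | [exists p : (dn G).-tuple 'I_(dn G), exists k : 'I_(dn G).+1,
     let q := take k p in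
     [&& path (arcrel (darcs G)) v q, uniq (v :: q), last v q == u & k <= r]]].

Definition outballS (G : digraph) (r : nat) (X : {set 'I_(dn G)}) :=
  \bigcup_(x in X) outball r x.

Definition gamma (r : nat) (G : digraph) : nat :=
  \big[minn/dn G]_(X : {set 'I_(dn G)} | outballS r X == setT) #|X|.

Definition scattered (G : digraph) (r : nat) (Y : {set 'I_(dn G)}) : bool :=
  [forall x in Y, forall y in Y, (x != y) ==>
     ~~ [exists u, (x \in outball r u) && (y \in outball r u)]].

Definition alpha (r : nat) (G : digraph) : nat :=
  \max_(Y : {set 'I_(dn G)} | scattered r Y) #|Y|.

Definition infinitely_many (P : digraph -> Prop) : Prop :=
  forall s : list digraph, exists G, P G /\ ~ List.In G s.

(* Take a source s, base vertices b_1, ..., b_n and pair vertices p_ij, with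
   arcs s -> p_ij and p_ij -> b_i, b_j.  Any two base vertices have the common
   in-neighbour p_ij and every other vertex lies in the closed out-ball of s, so
   a 1-scattered set has at most one vertex of each kind; {s, b_1} is one.  A
   vertex dominates at most two base vertices, so gamma_1 >= n / 2.  Every
   directed path of length 2 starts at s; hence in a directed model a branch
   set avoiding s must send all its outgoing arcs from one vertex, which has
   out-degree at most 2, and only one branch set contains s: every depth-r
   minor H has at most 3 |V(H)| arcs. *)

From HB Require Import structures.
From mathcomp Require Import all_boot all_order all_algebra zify.
Set Implicit Arguments. Unset Strict Implicit. Unset Printing Implicit Defensive.
Import GRing.Theory Num.Theory.

Lemma card_bigcup_le (I T : finType) (P : {pred I}) (F : I -> {set T}) :
  #|\bigcup_(i in P) F i| <= \sum_(i in P) #|F i|.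
Proof.
apply: (big_ind2 (fun (U : {set T}) m => #|U| <= m)) => // [|U1 m1 U2 m2 h1 h2].
- by rewrite cards0.
- exact: leq_trans (leq_card_setU _ _) (leq_add h1 h2).
Qed.

Lemma reach_no_in_arc n (A : {set 'I_n * 'I_n}) (z y : 'I_n) :
  (forall w, (w, y) \notin A) -> reach A z y -> z = y.
Proof.
move=> noin /connectP [p]; case/lastP: p => [_ -> //|p w].
rewrite rcons_path last_rcons => /andP [_ arc_w] y_eq.
by case/negP: (noin (last z p)); rewrite y_eq.
Qed.

Section Balls.
Variable G : digraph.
Implicit Types (r : nat) (x u : 'I_(dn G)) (X Y B D : {set 'I_(dn G)}).

Lemma mem_outball_self r x : x \in outball r x.
Proof.
rewrite inE; apply/existsP; exists (nseq_tuple (dn G) x).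
by apply/existsP; exists ord0; rewrite /= take0 /= eqxx.
Qed.

Lemma in_outball1 x u : (u \in outball 1 x) = (u == x) || ((x, u) \in darcs G).
Proof.
apply/idP/idP.
  rewrite inE => /existsP [[p p_sz] /existsP [[k lt_k] /and4P [pxq _ /eqP <- le_k1]]].
  case: k lt_k le_k1 pxq => [|[|k]] //= _ _; first by rewrite take0 eqxx.
  case: p p_sz => [|a p] _ /=; first by rewrite eqxx.
  by rewrite take0 /= andbT => xa; apply/orP; right.
case/orP => [/eqP -> | xu]; first exact: mem_outball_self.
have x_neq_u : x != u by apply: contraTneq xu => ->; apply: (forallP (dloopless G)).
have gt0_n : 0 < dn G by apply: leq_ltn_trans (ltn_ord x).
rewrite inE; apply/existsP; exists (nseq_tuple (dn G) u).
have take1 : take 1 (nseq (dn G) u) = [:: u] by rewrite take_nseq.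
apply/existsP; exists (@Ordinal (dn G).+1 1 gt0_n).
by rewrite /= take1 /= /arcrel andbT eqxx xu !inE x_neq_u.
Qed.

Lemma outballS_setT r : outballS r [set: 'I_(dn G)] = setT.
Proof.
apply/setP => x; rewrite inE; apply/bigcupP.
by exists x; [rewrite inE | apply: mem_outball_self].
Qed.

Lemma gamma_attained r :
  exists2 X : {set 'I_(dn G)}, outballS r X = setT & #|X| = gamma r G.
Proof.
apply: (big_ind (fun m => exists2 X : {set 'I_(dn G)}, outballS r X = setT & #|X| = m)).
- by exists setT; rewrite ?outballS_setT // cardsT card_ord.
- move=> m1 m2 [X1 ? <-] [X2 ? <-].
  by rewrite /minn; case: ltnP => _; [exists X1 | exists X2].
- by move=> X /eqP domX; exists X.
Qed.

Lemma dominating_card_lb r k X B :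
  outballS r X = setT -> (forall x, #|outball r x :&: B| <= k) -> #|B| <= k * #|X|.
Proof.
move=> domX hit_le.
have -> : B = \bigcup_(x in X) (outball r x :&: B).
  by rewrite -big_distrl /= -/(outballS r X) domX setTI.
rewrite mulnC -sum_nat_const; apply: leq_trans (card_bigcup_le _ _) _.
exact: leq_sum.
Qed.

Lemma scattered_card_le1 r Y D :
  scattered r Y -> {in D &, forall x y, exists u, x \in outball r u /\ y \in outball r u} ->
  #|Y :&: D| <= 1.
Proof.
move=> scatY common; apply/card_le1_eqP => x y.
rewrite !inE => /andP [Yx Dx] /andP [Yy Dy].
apply/eqP; apply: contraT; rewrite eq_sym => neq_xy.
have [u [xu yu]] := common x y Dx Dy.
have /forallP/(_ x)/implyP/(_ Yx)/forallP/(_ y)/implyP/(_ Yy)/implyP/(_ neq_xy) := scatY.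
by move/existsPn/(_ u); rewrite xu yu.
Qed.

Lemma scattered_set2 r x y :
  (forall u, x \in outball r u -> y \in outball r u -> False) -> scattered r [set x; y].
Proof.
move=> nocommon; apply/forallP => a; apply/implyP => Ha; apply/forallP => b.
apply/implyP => Hb; apply/implyP => neq_ab; apply/existsPn => u.
apply/negP => /andP [au bu]; move: Ha Hb neq_ab au bu.
rewrite !in_set2 => /orP [] /eqP -> /orP [] /eqP ->; rewrite ?eqxx // => _.
  exact: nocommon.
by move=> yu xu; apply: nocommon xu yu.
Qed.
End Balls.

Definition out_arcs (K : digraph) (v : 'I_(dn K)) := [set e in darcs K | e.1 == v].

Lemma card_darcs_out_arcs (K : digraph) : #|darcs K| = \sum_(v < dn K) #|out_arcs v|.
Proof.
rewrite -sum1_card (partition_big (fun e => e.1) xpredT) //=.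
by apply: eq_bigr => v _; rewrite -sum1_card; apply: eq_bigl => e; rewrite inE.
Qed.

Lemma card_out_arcs_le (K : digraph) (v : 'I_(dn K)) : #|out_arcs v| <= dn K.
Proof.
rewrite -(@card_in_imset _ _ snd); last first.
  by move=> [a b] [a' b']; rewrite !inE /= => /andP [_ /eqP ->] /andP [_ /eqP ->] ->.
by rewrite -[X in _ <= X]card_ord max_card.
Qed.

Section SourceThenOneStep.
Variables (G : digraph) (s : 'I_(dn G)) (D : nat).
Hypothesis two_steps_from_s :
  forall w x y, (w, x) \in darcs G -> (x, y) \in darcs G -> w = s.
Hypothesis outdeg_le : forall x, x != s -> #|[set y | (x, y) \in darcs G]| <= D.

Section Model.
Variables (H : digraph) (S : 'I_(dn H) -> {set 'I_(dn G)})
          (A : 'I_(dn H) -> {set 'I_(dn G) * 'I_(dn G)})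
          (d : 'I_(dn H) * 'I_(dn H) -> 'I_(dn G) * 'I_(dn G)).
Hypothesis branch_arcs :
  forall v a, a \in A v -> [/\ a \in darcs G, a.1 \in S v & a.2 \in S v].
Hypothesis branch_disjoint : forall u v, u != v -> [disjoint S u & S v].
Hypothesis arc_image : forall e, e \in darcs H ->
  [/\ d e \in darcs G, (d e).1 \in S e.1 & (d e).2 \in S e.2].
Hypothesis out_root : forall v, exists2 z, z \in S v &
  forall y, y \in [set (d e).1 | e in out_arcs v] -> reach (A v) z y.

Lemma head_image_inj v : {in out_arcs v &, injective (fun e => (d e).2)}.
Proof.
move=> [a b] [a' b']; rewrite !inE => /andP [ab /eqP /= a_v] /andP [ab' /eqP /= a'_v].
move: ab ab'; rewrite {}a_v {}a'_v => vb vb' /= eq_heads.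
have [_ _ Sb] := arc_image vb; have [_ _ Sb'] := arc_image vb'.
congr (_, _); apply/eqP; apply: contraT => neq_bb'.
by move: (disjointFr (branch_disjoint neq_bb') Sb); rewrite eq_heads Sb'.
Qed.

(* An arc of [A v] into a tail [(d e).1] would start a path of length 2 at a
   vertex of [S v], which is not [s]; so the root reaching the tails is each of
   them. *)
Lemma out_image_tails_const v : s \notin S v ->
  exists2 z, z \in S v & forall e, e \in out_arcs v -> (d e).1 = z.
Proof.
move=> sNv; have [z Sz z_reach] := out_root v; exists z => // e e_out.
move: (e_out); rewrite inE => /andP [eH /eqP e1_v].
have [de_arc S_tail _] := arc_image eH; rewrite e1_v in S_tail.
symmetry; apply: (reach_no_in_arc (A := A v)); last exact/z_reach/imset_f.
move=> w; apply/negP => /branch_arcs [w_arc Sw _].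
rewrite [d e]surjective_pairing in de_arc.
by move: sNv; rewrite -(two_steps_from_s w_arc de_arc) Sw.
Qed.

Lemma card_out_arcs_le_outdeg v : s \notin S v -> #|out_arcs v| <= D.
Proof.
move=> sNv; have [z Sz tail_z] := out_image_tails_const sNv.
have z_neq_s : z != s by apply: contraNneq sNv => <-.
rewrite -(card_in_imset (@head_image_inj v)); apply: leq_trans (outdeg_le z_neq_s).
apply/subset_leq_card/subsetP => _ /imsetP [e e_out ->]; rewrite inE -(tail_z e e_out).
move: e_out; rewrite inE => /andP [/arc_image [de_arc _ _] _].
by rewrite -surjective_pairing.
Qed.

Lemma card_branches_with_source : #|[set v | s \in S v]| <= 1.
Proof.
apply/card_le1_eqP => u v; rewrite !inE => Su Sv.
apply/eqP; apply: contraT; rewrite eq_sym => neq_uv.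
by rewrite (disjointFr (branch_disjoint neq_uv) Su) in Sv.
Qed.

End Model.

Lemma depth_minor_card_darcs r H : depth_minor r H G -> #|darcs H| <= D.+1 * dn H.
Proof.
move=> [S [A [d [branch_arcs disj arc_image conn _]]]].
have out_root v : exists2 z, z \in S v &
    forall y, y \in [set (d e).1 | e in out_arcs v] -> reach (A v) z y.
  by have [_ ? _] := conn v.
pose Ss := [set v | s \in S v].
rewrite card_darcs_out_arcs.
apply: (@leq_trans (\sum_(v < dn H) (D + (if v \in Ss then dn H else 0)))).
  apply: leq_sum => v _; rewrite inE; case: ifP => [_ | /negbT sNv].
    exact: leq_trans (card_out_arcs_le v) (leq_addl _ _).
  by rewrite addn0 (card_out_arcs_le_outdeg branch_arcs disj arc_image out_root sNv).
rewrite big_split /= -big_mkcond !sum_nat_const card_ord.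
have := card_branches_with_source disj; rewrite -/Ss; nia.
Qed.

End SourceThenOneStep.

Section DigraphOf.
Variables (T : finType) (e : rel T).
Hypothesis e_irr : irreflexive e.

Lemma digraph_of_loopless :
  [forall x : 'I_#|T|, (x, x) \notin [set p | e (enum_val p.1) (enum_val p.2)]].
Proof. by apply/forallP => x; rewrite inE e_irr. Qed.

Definition digraph_of := Digraph digraph_of_loopless.

Lemma digraph_of_arc (x y : 'I_(dn digraph_of)) :
  ((x, y) \in darcs digraph_of) = e (enum_val x) (enum_val y).
Proof. by rewrite inE. Qed.

Lemma out_digraph_of (x : T) :
  [set y | (enum_rank x, y) \in darcs digraph_of] = enum_rank @: [set y | e x y].
Proof.
apply/setP => v; rewrite -[v]enum_valK mem_imset; last exact: enum_rank_inj.
by rewrite !inE !enum_rankK.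
Qed.

Lemma in_outball1_digraph_of (x y : T) :
  (enum_rank y \in outball 1 (enum_rank x : 'I_(dn digraph_of))) = (y == x) || e x y.
Proof.
by rewrite (@in_outball1 digraph_of) digraph_of_arc !enum_rankK (inj_eq enum_rank_inj).
Qed.

Lemma outball1_digraph_of (x : T) :
  outball 1 (enum_rank x : 'I_(dn digraph_of)) = enum_rank @: [set y | (y == x) || e x y].
Proof.
apply/setP => v; rewrite -[v]enum_valK mem_imset; last exact: enum_rank_inj.
by rewrite in_outball1_digraph_of inE.
Qed.

End DigraphOf.

Inductive pair_vertex (n : nat) : predArgType :=
  Source | Base of 'I_n | Pair of 'I_n & 'I_n.
Arguments Source {n}.

Definition pair_vertex_code n (x : pair_vertex n) : option ('I_n + 'I_n * 'I_n) :=
  match x with Source => None | Base i => Some (inl i) | Pair i j => Some (inr (i, j)) end.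

Definition pair_vertex_decode n (c : option ('I_n + 'I_n * 'I_n)) : pair_vertex n :=
  match c with None => Source | Some (inl i) => Base i | Some (inr (i, j)) => Pair i j end.

Lemma pair_vertex_codeK n : cancel (@pair_vertex_code n) (@pair_vertex_decode n).
Proof. by case. Qed.

HB.instance Definition _ n := Finite.copy (pair_vertex n) (can_type (@pair_vertex_codeK n)).

Definition pair_arc n : rel (pair_vertex n) := fun x y =>
  match x, y with
  | Source, Pair _ _ => true
  | Pair i j, Base k => (k == i) || (k == j)
  | _, _ => false
  end.

Lemma pair_arc_irr n : irreflexive (@pair_arc n).
Proof. by case. Qed.

Definition pair_digraph n := digraph_of (@pair_arc_irr n).

Section PairVertex.
Variable n : nat.
Implicit Types (x y w : pair_vertex n).

Definition base_set := [set Base i | i : 'I_n].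

Lemma mem_base_set y : (y \in base_set) = if y is Base _ then true else false.
Proof. by case: y => [|i|i j]; apply/imsetP; [case | exists i | case]. Qed.

Lemma card_base_set : #|base_set| = n.
Proof. by rewrite card_imset ?card_ord // => i j [->]. Qed.

Lemma card_pair_vertex_gt : n < #|pair_vertex n|.
Proof.
rewrite -{1}card_base_set -cardsT proper_card // properT.
by apply/eqP => /setP /(_ Source); rewrite mem_base_set inE.
Qed.

Lemma pair_arc_from_source w x y : pair_arc w x -> pair_arc x y -> w = Source.
Proof. by case: w => [|?|? ?]; case: x. Qed.

Lemma card_pair_arc_out x : x != Source -> #|[set y | pair_arc x y]| <= 2.
Proof.
case: x => [//|i|i j] _.
  suff -> : [set y | pair_arc (Base i) y] = set0 by rewrite cards0.
  by apply/setP; case=> *; rewrite !inE.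
apply: leq_trans (_ : #|[set Base i; Base j]| <= 2); last by rewrite cards2; case: eqP.
by apply/subset_leq_card/subsetP; case=> [|k|k l]; rewrite !inE.
Qed.

Lemma card_pair_closed_out_base x :
  #|[set y | (y == x) || pair_arc x y] :&: base_set| <= 2.
Proof.
case: x => [|k|i j].
- suff -> : [set y | (y == Source) || pair_arc Source y] :&: base_set = set0.
    by rewrite cards0.
  by apply/setP => y; rewrite in_setI mem_base_set !inE; case: y.
- apply: leq_trans (_ : #|[set Base k]| <= 2); last by rewrite cards1.
  apply/subset_leq_card/subsetP => y; rewrite in_setI mem_base_set.
  by case: y => [|m|? ?]; rewrite ?andbF ?andbT // !inE /= ?orbF.
- apply: leq_trans (_ : #|[set Base i; Base j]| <= 2); last by rewrite cards2; case: eqP.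
  apply/subset_leq_card/subsetP => y; rewrite in_setI mem_base_set.
  by case: y => [|m|? ?]; rewrite ?andbF ?andbT // !inE /= ?orbF.
Qed.

Lemma pair_closed_out_source y : y \notin base_set -> (y == Source) || pair_arc Source y.
Proof. by rewrite mem_base_set; case: y. Qed.

End PairVertex.

Lemma pair_digraph_card_darcs n r H :
  depth_minor r H (pair_digraph n) -> #|darcs H| <= 3 * dn H.
Proof.
apply: (@depth_minor_card_darcs (pair_digraph n) (enum_rank Source) 2).
- move=> w x y; rewrite !digraph_of_arc => /pair_arc_from_source wx /wx <-.
  by rewrite enum_valK.
- move=> x; rewrite -[x]enum_valK (inj_eq enum_rank_inj) out_digraph_of.
  by rewrite card_imset; [apply: card_pair_arc_out | exact: enum_rank_inj].
Qed.

Lemma gamma_pair_digraph n : n <= 2 * gamma 1 (pair_digraph n).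
Proof.
have [X domX <-] := @gamma_attained (pair_digraph n) 1.
rewrite -{1}(card_base_set n) -(card_imset _ enum_rank_inj).
apply: dominating_card_lb domX _ => v.
rewrite -[v]enum_valK outball1_digraph_of -imsetI; last by move=> ? ? _ _ /enum_rank_inj.
by rewrite card_imset; [apply: card_pair_closed_out_base | exact: enum_rank_inj].
Qed.

Lemma pair_digraph_scattered_le2 n (Y : {set 'I_(dn (pair_digraph n))}) :
  scattered 1 Y -> #|Y| <= 2.
Proof.
move=> scatY; set B := enum_rank @: base_set n.
rewrite -(cardsID B Y) setDE.
have le1 := @scattered_card_le1 (pair_digraph n) 1 Y _ scatY.
apply: (leq_add (le1 _ _) (le1 _ _)).
- move=> _ _ /imsetP [_ /imsetP [i _ ->] ->] /imsetP [_ /imsetP [j _ ->] ->].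
  by exists (enum_rank (Pair i j)); rewrite !in_outball1_digraph_of /= !eqxx ?orbT.
- move=> v w; rewrite !inE -[v]enum_valK -[w]enum_valK !mem_imset; try exact: enum_rank_inj.
  move=> vNB wNB; exists (enum_rank Source).
  by rewrite !in_outball1_digraph_of !pair_closed_out_source.
Qed.

Lemma alpha_pair_digraph n : alpha 1 (pair_digraph n.+1) = 2.
Proof.
apply/eqP; rewrite eqn_leq; apply/andP; split.
  by apply/bigmax_leqP => Y; apply: pair_digraph_scattered_le2.
pose s : 'I_(dn (pair_digraph n.+1)) := enum_rank Source.
pose b : 'I_(dn (pair_digraph n.+1)) := enum_rank (Base ord0).
have scat_sb : scattered 1 [set s; b].
  apply: scattered_set2 => u; rewrite -[u]enum_valK !in_outball1_digraph_of.
  by case: (enum_val u).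
apply: leq_trans (leq_bigmax_cond _ scat_sb).
by rewrite cards2 (inj_eq enum_rank_inj).
Qed.

Lemma infinitely_many_unbounded (P : digraph -> Prop) :
  (forall m, exists2 G, P G & m < dn G) -> infinitely_many P.
Proof.
move=> unbounded s.
have [m le_m] : exists m, forall G, List.In G s -> dn G <= m.
  elim: s => [|G0 s [m le_m]]; first by exists 0.
  exists (maxn (dn G0) m) => G /= [<- | /le_m le_Gm]; first exact: leq_maxl.
  exact: leq_trans le_Gm (leq_maxr _ _).
have [G PG lt_mG] := unbounded m.
by exists G; split => // /le_m; rewrite leqNgt lt_mG.
Qed.

Theorem mainTheorem6 :
  exists C : digraph -> Prop,
    [/\ bounded_expansion C,
        (forall c : nat, infinitely_many (fun G => C G /\ c <= gamma 1 G)) &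
        (forall G, C G -> alpha 1 G = 2)].
Proof.
exists (fun G => exists n, G = pair_digraph n.+1); split.
- exists (fun=> 3%:R)%R => r _ H [n ->] minor.
  by rewrite -natrM ler_nat; apply: pair_digraph_card_darcs minor.
- move=> c; apply: infinitely_many_unbounded => m.
  pose n := (2 * c + m).+1.
  exists (pair_digraph n).
    by split; [exists (2 * c + m) | have := gamma_pair_digraph n; lia].
  by apply: leq_ltn_trans (card_pair_vertex_gt n); rewrite /n; lia.
- by move=> _ [n ->]; apply: alpha_pair_digraph.
Qed.
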